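(* Let $\mathcal C$ be a semi-abelian category, $(C_1,C_0,d,c,e)$ a reflexive graph, $k\colon X\to C_1$ a kernel of $d$, and $C_1\times_{C_0}X$ the pullback of $d$ along $c\circ k$ with projections $\pi_0\colon C_1\times_{C_0}X\to C_1$, $\pi_1\colon C_1\times_{C_0}X\to X$. Then \[0\to X\xrightarrow{(k,0)} C_1\times_{C_0}X \xrightarrow{\pi_1} X\to 0\] is a split short exact sequence with section $(e\circ c\circ k,1_X)$; and if $\xi\colon X\flat X\to X$ denotes the internal action corresponding to it, then the reflexive graph is star-multiplicative if and only if $[1_X,1_X]_\xi=0$.
   Context: A reflexive graph $(C_1,C_0,d,c,e)$ consists of $d,c\colon C_1\to C_0$, $e\colon C_0\to C_1$ with $d\circ e=c\circ e=1_{C_0}$. With $k$, $C_1\times_{C_0}X$ as in the claim, the graph is star-multiplicative if there is a morphism $\zeta\colon C_1\times_{C_0}X\to X$ with $\zeta\circ(k,0)=1_X$ and $\zeta\circ(e\circ c\circ k,1_X)=1_X$ (the pairs denoting morphisms into the pullback). In a semi-abelian category, internal actions $\xi\colon B\flat X\to X$ (where $B\flat X$ is the kernel of $\langle1_B,0\rangle\colon B+X\to B$) correspond, via the semi-direct product construction, to split short exact sequences $0\to X\xrightarrow{k}X\rtimes_\xi B\rightleftarrows B\to0$ with section $s$. For such an action, the $\xi$-commutator $[f,g]_\xi$ of $f\colon X\to Y$, $g\colon B\to Y$ is defined as follows: let $\kappa\colon X\diamond_\xi B\to X+B$ be the kernel of $\langle k,s\rangle\colon X+B\to X\rtimes_\xi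 B$; then $[f,g]_\xi\le Y$ is the regular image of $\langle f,g\rangle\circ\kappa$. *)

From Stdlib Require Import Setoid.

Set Implicit Arguments.
Unset Strict Implicit.

Record Category := {
  Ob :> Type;
  Hom : Ob -> Ob -> Type;
  idm : forall A, Hom A A;
  comp : forall A B D, Hom B D -> Hom A B -> Hom A D;
  comp_assoc : forall A B D E (h : Hom D E) (g : Hom B D) (f : Hom A B),
      comp h (comp g f) = comp (comp h g) f;
  comp_id_l : forall A B (f : Hom A B), comp (idm B) f = f;
  comp_id_r : forall A B (f : Hom A B), comp f (idm A) = f
}.

Arguments Hom : clear implicits.
Arguments idm {C} A : rename.
Arguments comp {C A B D} _ _ : rename.
Notation "g \o f" := (comp g f) (at level 40, left associativity).

Section Defs.
Variable C : Category.

Definition is_mono {A B : C} (f : Hom C A B) : Prop :=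
  forall (T : C) (g h : Hom C T A), f \o g = f \o h -> g = h.

Definition is_iso {A B : C} (f : Hom C A B) : Prop :=
  exists g : Hom C B A, g \o f = idm A /\ f \o g = idm B.

Definition is_initial (Z : C) : Prop :=
  forall B : C, exists f : Hom C Z B, forall g : Hom C Z B, g = f.
Definition is_terminal (Z : C) : Prop :=
  forall A : C, exists f : Hom C A Z, forall g : Hom C A Z, g = f.
Definition is_zero_object (Z : C) : Prop := is_initial Z /\ is_terminal Z.

Definition is_zero_mor {A B : C} (f : Hom C A B) : Prop :=
  exists (Z : C) (g : Hom C A Z) (h : Hom C Z B), is_zero_object Z /\ f = h \o g.

Definition is_pullback {A B D P : C} (f : Hom C A D) (g : Hom C B D)
    (p1 : Hom C P A) (p2 : Hom C P B) : Prop :=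
  f \o p1 = g \o p2 /\
  forall (T : C) (x : Hom C T A) (y : Hom C T B), f \o x = g \o y ->
    exists u : Hom C T P, p1 \o u = x /\ p2 \o u = y /\
      forall v : Hom C T P, p1 \o v = x -> p2 \o v = y -> v = u.

Definition is_kernel {K A B : C} (k : Hom C K A) (f : Hom C A B) : Prop :=
  is_zero_mor (f \o k) /\
  forall (T : C) (x : Hom C T A), is_zero_mor (f \o x) ->
    exists u : Hom C T K, k \o u = x /\ forall v : Hom C T K, k \o v = x -> v = u.

Definition is_cokernel {A B Q : C} (q : Hom C B Q) (f : Hom C A B) : Prop :=
  is_zero_mor (q \o f) /\
  forall (T : C) (x : Hom C B T), is_zero_mor (x \o f) ->
    exists u : Hom C Q T, u \o q = x /\ forall v : Hom C Q T, v \o q = x -> v = u.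

Definition is_coequalizer {R A Q : C} (q : Hom C A Q) (f g : Hom C R A) : Prop :=
  q \o f = q \o g /\
  forall (T : C) (x : Hom C A T), x \o f = x \o g ->
    exists u : Hom C Q T, u \o q = x /\ forall v : Hom C Q T, v \o q = x -> v = u.

Definition is_regular_epi {A Q : C} (q : Hom C A Q) : Prop :=
  exists (R : C) (f g : Hom C R A), is_coequalizer q f g.

Definition is_coproduct {X Y S : C} (i1 : Hom C X S) (i2 : Hom C Y S) : Prop :=
  forall (T : C) (x : Hom C X T) (y : Hom C Y T),
    exists u : Hom C S T, u \o i1 = x /\ u \o i2 = y /\
      forall v : Hom C S T, v \o i1 = x -> v \o i2 = y -> v = u.

(* internal equivalence relation (r1, r2) : R -> X x X, via generalized elements *)
Definition rel_of {R X : C} (r1 r2 : Hom C R X) (T : C) (a b : Hom C T X) : Prop :=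
  exists t : Hom C T R, r1 \o t = a /\ r2 \o t = b.

Definition is_equivalence_relation {R X : C} (r1 r2 : Hom C R X) : Prop :=
  (forall (T : C) (g h : Hom C T R), r1 \o g = r1 \o h -> r2 \o g = r2 \o h -> g = h) /\
  (forall T (a : Hom C T X), rel_of r1 r2 a a) /\
  (forall T (a b : Hom C T X), rel_of r1 r2 a b -> rel_of r1 r2 b a) /\
  (forall T (a b c : Hom C T X), rel_of r1 r2 a b -> rel_of r1 r2 b c -> rel_of r1 r2 a c).

Definition is_kernel_pair {R X Y : C} (r1 r2 : Hom C R X) (f : Hom C X Y) : Prop :=
  is_pullback f f r1 r2.

(* Semi-abelian (Janelidze–Márki–Tholen): pointed, Barr-exact,
   Bourn-protomodular, with finite limits and binary coproducts. *)
Definition is_semi_abelian : Prop :=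
  (exists Z : C, is_zero_object Z) /\
  (* finite limits: terminal object (the zero object) + pullbacks *)
  (forall (A B D : C) (f : Hom C A D) (g : Hom C B D),
      exists (P : C) (p1 : Hom C P A) (p2 : Hom C P B), is_pullback f g p1 p2) /\
  (forall X Y : C, exists (S : C) (i1 : Hom C X S) (i2 : Hom C Y S), is_coproduct i1 i2) /\
  (forall (A B : C) (f : Hom C A B),
      exists (I : C) (q : Hom C A I) (m : Hom C I B),
        f = m \o q /\ is_regular_epi q /\ is_mono m) /\
  (forall (A B D P : C) (f : Hom C A D) (g : Hom C B D) (p1 : Hom C P A) (p2 : Hom C P B),
      is_pullback f g p1 p2 -> is_regular_epi g -> is_regular_epi p1) /\
  (forall (R X : C) (r1 r2 : Hom C R X), is_equivalence_relation r1 r2 ->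
      exists (Y : C) (f : Hom C X Y), is_kernel_pair r1 r2 f) /\
  (* protomodular (pointed form): the split short five lemma *)
  (forall (K A B K' A' B' : C) (k : Hom C K A) (p : Hom C A B) (s : Hom C B A)
          (k' : Hom C K' A') (p' : Hom C A' B') (s' : Hom C B' A')
          (w : Hom C K K') (u : Hom C A A') (v : Hom C B B'),
      is_kernel k p -> p \o s = idm B ->
      is_kernel k' p' -> p' \o s' = idm B' ->
      u \o k = k' \o w -> p' \o u = v \o p -> u \o s = s' \o v ->
      is_iso w -> is_iso v -> is_iso u).

Definition is_split_short_exact {X A B : C} (k : Hom C X A) (p : Hom C A B)
    (s : Hom C B A) : Prop :=
  is_kernel k p /\ is_cokernel p k /\ p \o s = idm B.

Definition regular_image_is_zero {A B : C} (f : Hom C A B) : Prop :=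
  forall (I : C) (q : Hom C A I) (m : Hom C I B),
    f = m \o q -> is_regular_epi q -> is_mono m -> is_zero_object I.

(* [f, g]_xi = 0 for the action xi corresponding to the split extension
   (k, p, s) : 0 -> X -> A -> B -> 0, computed on the split extension itself
   (which is X ⋊_xi B up to the canonical isomorphism, compatibly with k, s). *)
Definition commutator_trivial {X A B Y : C} (k : Hom C X A) (s : Hom C B A)
    (f : Hom C X Y) (g : Hom C B Y) : Prop :=
  forall (S : C) (j1 : Hom C X S) (j2 : Hom C B S), is_coproduct j1 j2 ->
  forall (ks : Hom C S A), ks \o j1 = k -> ks \o j2 = s ->
  forall (fg : Hom C S Y), fg \o j1 = f -> fg \o j2 = g ->
  forall (D : C) (kappa : Hom C D S), is_kernel kappa ks ->
    regular_image_is_zero (fg \o kappa).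

End Defs.

(* The sequence is the pullback along [c \o k] of the split extension
   [(k, d, e)], so [(k,0)] is a kernel of [pi1]; in a protomodular category a
   kernel and a section of a split epi are jointly epic, so [pi1] is also its
   cokernel.  Star-multiplicativity says that [(1_X, 1_X)] extends along
   [((k,0), (e c k, 1_X))] to [C1 x_C0 X], and in general [(f, g)] extends
   along [(k, s)] iff [[f, g]_xi = 0]: factor [<k, s> : X + B -> A] as a
   regular epi [q] followed by a mono [m]; both [k] and [s] factor through
   [m], so [m] is invertible by the split short five lemma, and [<f, g>]
   factors through [q] as soon as it kills the kernel of [q], because a
   regular epi is the cokernel of its kernel. *)

Set Implicit Arguments.
Unset Strict Implicit.

Ltac assoc_r := repeat rewrite <- comp_assoc.
Ltac assoc_r_in H := repeat rewrite <- comp_assoc in H.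

Section GeneralCategory.
Variable C : Category.

Definition is_epi {A B : C} (f : Hom C A B) : Prop :=
  forall (T : C) (g h : Hom C B T), g \o f = h \o f -> g = h.

Lemma zero_object_hom_from (Z : C) (HZ : is_zero_object Z) (B : C)
    (f g : Hom C Z B) : f = g.
Proof.
  destruct HZ as [HZ _]. destruct (HZ B) as [u Hu].
  now rewrite (Hu f), (Hu g).
Qed.

Lemma zero_object_hom_to (Z : C) (HZ : is_zero_object Z) (A : C)
    (f g : Hom C A Z) : f = g.
Proof.
  destruct HZ as [_ HZ]. destruct (HZ A) as [u Hu].
  now rewrite (Hu f), (Hu g).
Qed.

Lemma zero_mor_unique (A B : C) (f g : Hom C A B) :
  is_zero_mor f -> is_zero_mor g -> f = g.
Proof.
  intros [Z [f0 [f1 [HZ ->]]]] [Z' [g0 [g1 [HZ' ->]]]].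
  destruct (proj1 HZ Z') as [j _]. destruct (proj1 HZ' Z) as [i _].
  assert (Hij : i \o j = idm Z) by apply (zero_object_hom_from HZ).
  rewrite <- (comp_id_l f0), <- Hij. assoc_r.
  rewrite (zero_object_hom_to HZ' (j \o f0) g0), comp_assoc.
  now rewrite (zero_object_hom_from HZ' (f1 \o i) g1).
Qed.

Lemma zero_mor_postcomp (A B D : C) (f : Hom C A B) (g : Hom C B D) :
  is_zero_mor f -> is_zero_mor (g \o f).
Proof.
  intros [Z [f0 [f1 [HZ ->]]]]. exists Z, f0, (g \o f1).
  split; [exact HZ | apply comp_assoc].
Qed.

Lemma zero_mor_precomp (A B D : C) (f : Hom C B D) (g : Hom C A B) :
  is_zero_mor f -> is_zero_mor (f \o g).
Proof.
  intros [Z [f0 [f1 [HZ ->]]]]. exists Z, (f0 \o g), f1.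
  split; [exact HZ | symmetry; apply comp_assoc].
Qed.

Lemma zero_mor_exists (A B : C) :
  (exists Z : C, is_zero_object Z) -> exists f : Hom C A B, is_zero_mor f.
Proof.
  intros [Z HZ]. destruct (proj2 HZ A) as [f0 _]. destruct (proj1 HZ B) as [f1 _].
  exists (f1 \o f0), Z, f0, f1. auto.
Qed.

Lemma mono_reflects_zero_mor (A B D : C) (m : Hom C B D) (f : Hom C A B) :
  is_mono m -> is_zero_mor (m \o f) -> is_zero_mor f.
Proof.
  intros Hm [Z [f0 [f1 [HZ Hmf]]]]. destruct (proj1 HZ B) as [i _].
  exists Z, f0, i. split; [exact HZ |]. apply Hm.
  now rewrite Hmf, comp_assoc, (zero_object_hom_from HZ (m \o i) f1).
Qed.

Lemma regular_epi_epi (A Q : C) (q : Hom C A Q) : is_regular_epi q -> is_epi q.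
Proof.
  intros [R [f1 [f2 [Hq Hqu]]]] T g h Hgh.
  assert (Hg : (g \o q) \o f1 = (g \o q) \o f2) by (assoc_r; now rewrite Hq).
  destruct (Hqu T _ Hg) as [u [_ Hu]].
  now rewrite (Hu g eq_refl), (Hu h (eq_sym Hgh)).
Qed.

(* [Z] maps to [I] and back, so [I] is a retract of a zero object. *)
Lemma zero_object_of_subterminal (Z I : C) :
  is_zero_object Z -> (forall T (g h : Hom C T I), g = h) -> is_zero_object I.
Proof.
  intros HZ Hsub. destruct (proj1 HZ I) as [s _]. destruct (proj2 HZ I) as [t _].
  split.
  - intros B. destruct (proj1 HZ B) as [z _]. exists (z \o t). intros g.
    rewrite <- (comp_id_r g), (Hsub _ (idm I) (s \o t)), comp_assoc.
    now rewrite (zero_object_hom_from HZ (g \o s) z).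
  - intros T. destruct (proj2 HZ T) as [z _]. exists (s \o z). intros; apply Hsub.
Qed.

Lemma zero_mor_regular_image_zero (A B : C) (f : Hom C A B) :
  is_zero_mor f -> regular_image_is_zero f.
Proof.
  intros [Z [f0 [f1 [HZ Hf]]]] I q m Hmq Hq Hm.
  destruct (proj2 HZ I) as [t _].
  assert (Hm0 : m = f1 \o t).
  { apply (regular_epi_epi Hq). rewrite <- Hmq, Hf. assoc_r.
    now rewrite (zero_object_hom_to HZ (t \o q) f0). }
  apply (zero_object_of_subterminal HZ). intros T g h. apply Hm.
  rewrite Hm0. assoc_r. now rewrite (zero_object_hom_to HZ (t \o g) (t \o h)).
Qed.

Lemma pullback_sym (A B D P : C) (f : Hom C A D) (g : Hom C B D)
    (p1 : Hom C P A) (p2 : Hom C P B) :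
  is_pullback f g p1 p2 -> is_pullback g f p2 p1.
Proof.
  intros [Hsq Hu]. split; [now symmetry |].
  intros T y x Hyx. destruct (Hu T x y (eq_sym Hyx)) as [u [Hu1 [Hu2 Hun]]].
  exists u. split; [exact Hu2 | split; [exact Hu1 |]].
  intros v Hv2 Hv1. now apply Hun.
Qed.

Lemma pullback_kernel (A B D P K : C) (f : Hom C A D) (g : Hom C B D)
    (p1 : Hom C P A) (p2 : Hom C P B) (k : Hom C K A) (k0 : Hom C K P) :
  is_pullback f g p1 p2 -> is_kernel k f ->
  p1 \o k0 = k -> is_zero_mor (p2 \o k0) -> is_kernel k0 p2.
Proof.
  intros [Hsq Hpb] [_ Hk] Hk01 Hk02. split; [exact Hk02 |]. intros T x Hx.
  assert (Hfx : is_zero_mor (f \o (p1 \o x))).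
  { rewrite comp_assoc, Hsq, <- comp_assoc. now apply zero_mor_postcomp. }
  destruct (Hk T _ Hfx) as [u [Hu Hun]]. exists u. split.
  - assert (Hsqx : f \o (p1 \o x) = g \o (p2 \o x)) by now rewrite !comp_assoc, Hsq.
    destruct (Hpb T _ _ Hsqx) as [w [_ [_ Hw]]].
    rewrite (Hw x eq_refl eq_refl). apply Hw.
    + now rewrite comp_assoc, Hk01.
    + apply zero_mor_unique; [| exact Hx].
      rewrite comp_assoc. now apply zero_mor_precomp.
  - intros v Hv. apply Hun. now rewrite <- Hk01, <- Hv, comp_assoc.
Qed.

Lemma kernel_of_mono_comp (K A I B : C) (kappa : Hom C K A) (q : Hom C A I)
    (m : Hom C I B) :
  is_kernel kappa (m \o q) -> is_mono m -> is_kernel kappa q.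
Proof.
  intros [Hz Hk] Hm. split.
  - apply (mono_reflects_zero_mor Hm). now rewrite comp_assoc.
  - intros T x Hx. apply Hk. rewrite <- comp_assoc. now apply zero_mor_postcomp.
Qed.

Lemma commutator_trivial_of_extension (X A B Y : C) (k : Hom C X A)
    (s : Hom C B A) (f : Hom C X Y) (g : Hom C B Y) (h : Hom C A Y) :
  h \o k = f -> h \o s = g -> commutator_trivial k s f g.
Proof.
  intros Hhk Hhs S j1 j2 Hcop ks Hks1 Hks2 fg Hfg1 Hfg2 D kappa Hkappa.
  destruct (Hcop Y f g) as [u [_ [_ Hu]]].
  assert (Hfg : fg = h \o ks).
  { rewrite (Hu fg Hfg1 Hfg2). symmetry.
    apply Hu; assoc_r; [rewrite Hks1 | rewrite Hks2]; assumption. }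
  apply zero_mor_regular_image_zero. rewrite Hfg, <- comp_assoc.
  exact (zero_mor_postcomp h (proj1 Hkappa)).
Qed.

End GeneralCategory.

Section SemiAbelian.
Variable C : Category.
Hypothesis HC : is_semi_abelian C.

Lemma has_zero_object : exists Z : C, is_zero_object Z.
Proof. exact (proj1 HC). Qed.

Lemma has_pullbacks (A B D : C) (f : Hom C A D) (g : Hom C B D) :
  exists (P : C) (p1 : Hom C P A) (p2 : Hom C P B), is_pullback f g p1 p2.
Proof. exact (proj1 (proj2 HC) A B D f g). Qed.

Lemma has_coproducts (X Y : C) :
  exists (S : C) (i1 : Hom C X S) (i2 : Hom C Y S), is_coproduct i1 i2.
Proof. exact (proj1 (proj2 (proj2 HC)) X Y). Qed.

Lemma has_image_factorisation (A B : C) (f : Hom C A B) :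
  exists (I : C) (q : Hom C A I) (m : Hom C I B),
    f = m \o q /\ is_regular_epi q /\ is_mono m.
Proof. exact (proj1 (proj2 (proj2 (proj2 HC))) A B f). Qed.

Lemma split_short_five (K A B K' A' B' : C) (k : Hom C K A) (p : Hom C A B)
    (s : Hom C B A) (k' : Hom C K' A') (p' : Hom C A' B') (s' : Hom C B' A')
    (w : Hom C K K') (u : Hom C A A') (v : Hom C B B') :
  is_kernel k p -> p \o s = idm B -> is_kernel k' p' -> p' \o s' = idm B' ->
  u \o k = k' \o w -> p' \o u = v \o p -> u \o s = s' \o v ->
  is_iso w -> is_iso v -> is_iso u.
Proof. exact (proj2 (proj2 (proj2 (proj2 (proj2 (proj2 HC)))))
                K A B K' A' B' k p s k' p' s' w u v). Qed.

Lemma kernel_exists (A B : C) (f : Hom C A B) :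
  exists (K : C) (k : Hom C K A), is_kernel k f.
Proof.
  destruct has_zero_object as [Z HZ]. destruct (proj1 HZ B) as [z _].
  destruct (has_pullbacks f z) as [K [k [t [Hsq Hpb]]]].
  exists K, k. split.
  - rewrite Hsq. now exists Z, t, z.
  - intros T x Hx. destruct (proj2 HZ T) as [t' _].
    assert (Hxt : f \o x = z \o t').
    { apply zero_mor_unique; [exact Hx | now exists Z, t', z]. }
    destruct (Hpb T x t' Hxt) as [u [Hu [_ Hun]]].
    exists u. split; [exact Hu |].
    intros v Hv. apply Hun; [exact Hv | apply (zero_object_hom_to HZ)].
Qed.

Lemma binary_product_exists (A B : C) :
  exists (Pr : C) (pr1 : Hom C Pr A) (pr2 : Hom C Pr B),
    forall W (a : Hom C W A) (b : Hom C W B), exists u : Hom C W Pr,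
      pr1 \o u = a /\ pr2 \o u = b /\
      forall v, pr1 \o v = a -> pr2 \o v = b -> v = u.
Proof.
  destruct has_zero_object as [Z HZ].
  destruct (proj2 HZ A) as [tA _]. destruct (proj2 HZ B) as [tB _].
  destruct (has_pullbacks tA tB) as [Pr [pr1 [pr2 [_ Hpb]]]].
  exists Pr, pr1, pr2. intros W a b. apply Hpb. apply (zero_object_hom_to HZ).
Qed.

(* The equaliser of [x, y] is the pullback of [<x, y>] along the diagonal. *)
Lemma equalizer_exists (A T : C) (x y : Hom C A T) :
  exists (E : C) (m : Hom C E A), is_mono m /\ x \o m = y \o m /\
    forall W (z : Hom C W A), x \o z = y \o z -> exists u, m \o u = z.
Proof.
  destruct (binary_product_exists T T) as [Pr [pr1 [pr2 Hprod]]].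
  assert (Hpair_ext : forall W (v w : Hom C W Pr),
             pr1 \o v = pr1 \o w -> pr2 \o v = pr2 \o w -> v = w).
  { intros W v w H1 H2. destruct (Hprod W (pr1 \o w) (pr2 \o w)) as [u [_ [_ Hu]]].
    now rewrite (Hu v H1 H2), (Hu w eq_refl eq_refl). }
  destruct (Hprod A x y) as [xy [Hxy1 [Hxy2 _]]].
  destruct (Hprod T (idm T) (idm T)) as [diag [Hd1 [Hd2 _]]].
  destruct (has_pullbacks xy diag) as [E [m [n [Hsq Hpb]]]].
  assert (Hxm : x \o m = n).
  { rewrite <- Hxy1. assoc_r. now rewrite Hsq, comp_assoc, Hd1, comp_id_l. }
  assert (Hym : y \o m = n).
  { rewrite <- Hxy2. assoc_r. now rewrite Hsq, comp_assoc, Hd2, comp_id_l. }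
  exists E, m. split; [| split].
  - intros W g h Hg.
    assert (Hn : n \o g = n \o h) by (rewrite <- Hxm; assoc_r; now rewrite Hg).
    destruct (Hpb W (m \o h) (n \o h)) as [u [_ [_ Hu]]].
    { now rewrite comp_assoc, Hsq, comp_assoc. }
    now rewrite (Hu g Hg Hn), (Hu h eq_refl eq_refl).
  - now rewrite Hxm, Hym.
  - intros W z Hz. destruct (Hpb W z (x \o z)) as [u [Hu _]].
    { apply Hpair_ext; assoc_r.
      - now rewrite comp_assoc, Hxy1, comp_assoc, Hd1, comp_id_l.
      - now rewrite comp_assoc, Hxy2, comp_assoc, Hd2, comp_id_l. }
    now exists u.
Qed.

Lemma mono_through_split_iso (K A B E : C) (k : Hom C K A) (p : Hom C A B)
    (s : Hom C B A) (m : Hom C E A) (k' : Hom C K E) (s' : Hom C B E) :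
  is_kernel k p -> p \o s = idm B -> is_mono m ->
  m \o k' = k -> m \o s' = s -> is_iso m.
Proof.
  intros Hk Hps Hm Hk' Hs'.
  apply (split_short_five (k := k') (p := p \o m) (s := s') (k' := k) (p' := p)
           (s' := s) (w := idm K) (v := idm B)); auto.
  - split.
    + assoc_r. rewrite Hk'. exact (proj1 Hk).
    + intros T x Hx. assoc_r_in Hx. destruct (proj2 Hk T _ Hx) as [u [Hu Hun]].
      exists u. split.
      * apply Hm. now rewrite comp_assoc, Hk'.
      * intros v Hv. apply Hun. now rewrite <- Hk', <- comp_assoc, Hv.
  - assoc_r. now rewrite Hs'.
  - now rewrite comp_id_r.
  - now rewrite comp_id_l.
  - now rewrite comp_id_r.
  - exists (idm K). split; apply comp_id_l.
  - exists (idm B). split; apply comp_id_l.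
Qed.

(* Both maps factor through the equaliser of [x, y], which is then
   invertible by [mono_through_split_iso]. *)
Lemma split_jointly_epic (K A B T : C) (k : Hom C K A) (p : Hom C A B)
    (s : Hom C B A) (x y : Hom C A T) :
  is_kernel k p -> p \o s = idm B -> x \o k = y \o k -> x \o s = y \o s -> x = y.
Proof.
  intros Hk Hps Hxk Hxs.
  destruct (equalizer_exists x y) as [E [m [Hm [Hxy Hfac]]]].
  destruct (Hfac _ k Hxk) as [k' Hk']. destruct (Hfac _ s Hxs) as [s' Hs'].
  destruct (mono_through_split_iso Hk Hps Hm Hk' Hs') as [minv [_ Hminv]].
  now rewrite <- (comp_id_r x), <- (comp_id_r y), <- Hminv, !comp_assoc, Hxy.
Qed.

Lemma split_kernel_cokernel (K A B : C) (k : Hom C K A) (p : Hom C A B)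
    (s : Hom C B A) :
  is_kernel k p -> p \o s = idm B -> is_cokernel p k.
Proof.
  intros Hk Hps. split; [exact (proj1 Hk) |]. intros T x Hx.
  exists (x \o s). split.
  - symmetry. apply (split_jointly_epic Hk Hps).
    + apply zero_mor_unique; [exact Hx |].
      assoc_r. apply zero_mor_postcomp, zero_mor_postcomp, (proj1 Hk).
    + assoc_r. now rewrite Hps, comp_id_r.
  - intros v Hv. now rewrite <- Hv, <- comp_assoc, Hps, comp_id_r.
Qed.

Lemma regular_image_zero_iff (A B : C) (f : Hom C A B) :
  is_zero_mor f <-> regular_image_is_zero f.
Proof.
  split; [apply zero_mor_regular_image_zero |]. intros Hf.
  destruct (has_image_factorisation f) as [I [q [m [Hmq [Hq Hm]]]]].
  rewrite Hmq. exists I, q, m. split; [exact (Hf I q m Hmq Hq Hm) | reflexivity].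
Qed.

(* [x] coequalises the kernel pair [(r1, r2)] of [q]: [r1] is split by the
   diagonal and its kernel is [kappa] seen in the kernel pair, so
   [split_jointly_epic] applies. *)
Lemma regular_epi_cokernel (D A Q : C) (kappa : Hom C D A) (q : Hom C A Q) :
  is_regular_epi q -> is_kernel kappa q -> is_cokernel q kappa.
Proof.
  intros Hq Hkappa. split; [exact (proj1 Hkappa) |]. intros T x Hx.
  destruct Hq as [R0 [f1 [f2 [Hcoeq Hcoequ]]]].
  destruct (has_pullbacks q q) as [R [r1 [r2 Hpair]]].
  destruct (proj2 Hpair A (idm A) (idm A) eq_refl) as [diag [Hd1 [Hd2 _]]].
  destruct (zero_mor_exists D A has_zero_object) as [z Hz].
  assert (Hqz : q \o z = q \o kappa).
  { apply zero_mor_unique; [now apply zero_mor_postcomp | exact (proj1 Hkappa)]. }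
  destruct (proj2 Hpair D z kappa Hqz) as [kk [Hkk1 [Hkk2 _]]].
  assert (Hkk : is_kernel kk r1).
  { apply (pullback_kernel (pullback_sym Hpair) Hkappa Hkk2). now rewrite Hkk1. }
  assert (Hxr : x \o r1 = x \o r2).
  { apply (split_jointly_epic Hkk Hd1); assoc_r.
    - rewrite Hkk1, Hkk2. apply zero_mor_unique; [now apply zero_mor_postcomp | exact Hx].
    - now rewrite Hd1, Hd2. }
  assert (Hxf : x \o f1 = x \o f2).
  { destruct (proj2 Hpair R0 f1 f2 Hcoeq) as [t [Ht1 [Ht2 _]]].
    now rewrite <- Ht1, <- Ht2, !comp_assoc, Hxr. }
  exact (Hcoequ T x Hxf).
Qed.

Lemma commutator_trivial_iff_extends (X A B Y : C) (k : Hom C X A)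
    (p : Hom C A B) (s : Hom C B A) (f : Hom C X Y) (g : Hom C B Y) :
  is_kernel k p -> p \o s = idm B ->
  (exists h : Hom C A Y, h \o k = f /\ h \o s = g) <-> commutator_trivial k s f g.
Proof.
  intros Hk Hps. split.
  { intros [h [Hhk Hhs]]. exact (commutator_trivial_of_extension Hhk Hhs). }
  intros Hcomm.
  destruct (has_coproducts X B) as [S [j1 [j2 Hcop]]].
  destruct (Hcop A k s) as [ks [Hks1 [Hks2 _]]].
  destruct (Hcop Y f g) as [fg [Hfg1 [Hfg2 _]]].
  destruct (kernel_exists ks) as [D [kappa Hkappa]].
  assert (Hfgkappa : is_zero_mor (fg \o kappa)).
  { apply regular_image_zero_iff.
    exact (Hcomm S j1 j2 Hcop ks Hks1 Hks2 fg Hfg1 Hfg2 D kappa Hkappa). }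
  destruct (has_image_factorisation ks) as [I [q [m [Hmq [Hq Hm]]]]].
  assert (Hmiso : is_iso m).
  { apply (mono_through_split_iso (k' := q \o j1) (s' := q \o j2) Hk Hps Hm);
      now rewrite comp_assoc, <- Hmq. }
  destruct Hmiso as [minv [Hminv _]].
  rewrite Hmq in Hkappa. apply (kernel_of_mono_comp Hkappa) in Hm.
  destruct (proj2 (regular_epi_cokernel Hq Hm) Y fg Hfgkappa) as [u [Hu _]].
  assert (Hks : (u \o minv) \o ks = fg).
  { now rewrite Hmq, <- comp_assoc, (comp_assoc minv), Hminv, comp_id_l. }
  exists (u \o minv). split.
  - now rewrite <- Hks1, comp_assoc, Hks.
  - now rewrite <- Hks2, comp_assoc, Hks.
Qed.

End SemiAbelian.

Theorem mainTheorem8 (C : Category) (HC : is_semi_abelian C)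
  (C1 C0 : C) (d c : Hom C C1 C0) (e : Hom C C0 C1)
  (Hde : d \o e = idm C0) (Hce : c \o e = idm C0)
  (X : C) (k : Hom C X C1) (Hk : is_kernel k d)
  (P : C) (pi0 : Hom C P C1) (pi1 : Hom C P X)
  (HP : is_pullback d (c \o k) pi0 pi1)
  (k0 : Hom C X P) (Hk0a : pi0 \o k0 = k) (Hk0b : is_zero_mor (pi1 \o k0))
  (sec : Hom C X P) (Hsa : pi0 \o sec = e \o c \o k) (Hsb : pi1 \o sec = idm X) :
  is_split_short_exact k0 pi1 sec /\
  ((exists zeta : Hom C P X, zeta \o k0 = idm X /\ zeta \o sec = idm X) <->
   commutator_trivial k0 sec (idm X) (idm X)).
Proof.
  assert (Hker : is_kernel k0 pi1) by exact (pullback_kernel HP Hk Hk0a Hk0b).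
  split.
  - split; [exact Hker |]. split; [exact (split_kernel_cokernel HC Hker Hsb) | exact Hsb].
  - exact (commutator_trivial_iff_extends HC (idm X) (idm X) Hker Hsb).
Qed.
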